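(* Let $T$ be a triangle of type $(108^\circ,36^\circ,36^\circ)$ or $(72^\circ,72^\circ,36^\circ)$. Then $h(n,T)\le\frac{n^3}{25}$ for every positive integer $n$.
   Context: A triangle is of type $(\alpha,\beta,\gamma)$ if $\alpha\ge\beta\ge\gamma$ are its interior angles in degrees. For a triangle $T$ with side lengths $a,b,c$ and $\varepsilon>0$, with $\varepsilon'=\varepsilon\min\{a,b,c\}$, a triangle $A'B'C'$ is $\varepsilon$-congruent to $T$ if there are $A,B,C\in\mathbb{R}^2$ with $ABC$ congruent to $T$ and $A',B',C'$ within distance $\varepsilon'$ of $A,B,C$ respectively. $h(n,T,\varepsilon)$ is the maximum over $n$-point sets $P\subseteq\mathbb{R}^2$ of the number of 3-subsets of $P$ forming triangles $\varepsilon$-congruent to $T$, and $h(n,T)=\min_{\varepsilon>0}h(n,T,\varepsilon)$. *)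

From Stdlib Require Import Reals Lra List Permutation ClassicalEpsilon.
Import ListNotations.
Open Scope R_scope.

Definition point : Type := (R * R)%type.

Definition dist (p q : point) : R :=
  sqrt ((fst p - fst q) ^ 2 + (snd p - snd q) ^ 2).

Definition angle_at (v p q : point) : R :=
  acos (((fst p - fst v) * (fst q - fst v) + (snd p - snd v) * (snd q - snd v))
        / (dist v p * dist v q)).

Definition deg (x : R) : R := x * PI / 180.

(* A triangle T, given by its vertices (T1,T2,T3), is of type (a,b,c)
   (a >= b >= c in degrees) if its vertices are pairwise distinct and its
   interior angles, in some order of the vertices, are a, b, c. *)
Definition tri_type (T : point * point * point) (a b c : R) : Prop :=
  let '(X, Y, Z) := T in
  X <> Y /\ Y <> Z /\ X <> Z /\
  exists A B C : point,
    Permutation [A; B; C] [X; Y; Z] /\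
    angle_at A B C = deg a /\ angle_at B A C = deg b /\ angle_at C A B = deg c.

Definition congruent (A B C : point) (T : point * point * point) : Prop :=
  let '(X, Y, Z) := T in
  dist A B = dist X Y /\ dist B C = dist Y Z /\ dist A C = dist X Z.

Definition min_side (T : point * point * point) : R :=
  let '(X, Y, Z) := T in Rmin (dist X Y) (Rmin (dist Y Z) (dist X Z)).

Definition eps_congruent (eps : R) (T : point * point * point)
    (A' B' C' : point) : Prop :=
  exists A B C : point, congruent A B C T /\
    dist A' A <= eps * min_side T /\ dist B' B <= eps * min_side T /\
    dist C' C <= eps * min_side T.

Definition good3 (eps : R) (T : point * point * point) (p q r : point) : Prop :=
  exists A' B' C' : point, Permutation [A'; B'; C'] [p; q; r] /\
    eps_congruent eps T A' B' C'.

(* all 3-subsets of a duplicate-free list, as triples of positions i<j<k *)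
Fixpoint pairs_of {A : Type} (l : list A) : list (A * A) :=
  match l with
  | [] => []
  | x :: t => map (fun y => (x, y)) t ++ pairs_of t
  end.

Fixpoint triples_of {A : Type} (l : list A) : list (A * A * A) :=
  match l with
  | [] => []
  | x :: t => map (fun yz => (x, fst yz, snd yz)) (pairs_of t) ++ triples_of t
  end.

Definition Pdec (P : Prop) : bool :=
  if excluded_middle_informative P then true else false.

Definition count_good (eps : R) (T : point * point * point) (P : list point) : nat :=
  length (filter (fun t => let '(p, q, r) := t in Pdec (good3 eps T p q r))
                 (triples_of P)).

Definition h_eps_le (n : nat) (T : point * point * point) (eps k : R) : Prop :=
  forall P : list point, NoDup P -> length P = n -> INR (count_good eps T P) <= k.

(* h(n,T) = min_{eps>0} h(n,T,eps) <= k *)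
Definition h_le (n : nat) (T : point * point * point) (k : R) : Prop :=
  exists eps : R, 0 < eps /\ h_eps_le n T eps k.

(* A triangle eps-congruent to T is an approximate golden isosceles triangle:
   writing u for the shortest side of T and phi for the golden ratio, its
   sides are close to u, u, phi u or to phi u, phi u, u.  Colour a pair of
   points by whether its length is close to phi u.  Four points of the plane
   have vanishing Gram determinant, and this rules out two configurations in
   which all six distances are close to u or phi u: a point joined to three
   others by sides of one colour, and a four-cycle of legs whose diagonals
   are bases.  By Zykov symmetrization the Lagrangian of the hypergraph of
   approximate golden triangles is maximised on a point set all of whose
   pairs lie in a common edge, so all its distances are close to u or phi u.
   The forbidden configurations leave at most five such points, where the
   Lagrangian is at most 1/25 (attained by the regular pentagon).  Unit
   weights then bound the number of edges by n^3/25. *)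

From Stdlib Require Import Reals Rgeom Lra Psatz List Permutation Bool.
From Stdlib Require Import Classical ClassicalEpsilon Wf_nat.
(* After [Reals], whose [dist] would otherwise shadow [Defs.dist]. *)
From Pilot Require Import Defs.
Import ListNotations.
Open Scope R_scope.

Lemma Permutation_3 {A : Type} (x y z p q r : A) : Permutation [x; y; z] [p; q; r] ->
  [x; y; z] = [p; q; r] \/ [x; y; z] = [p; r; q] \/ [x; y; z] = [q; p; r] \/
  [x; y; z] = [q; r; p] \/ [x; y; z] = [r; p; q] \/ [x; y; z] = [r; q; p].
Proof.
  intro H.
  assert (Hx : In x [p; q; r]) by (apply (Permutation_in x H); left; reflexivity).
  destruct Hx as [<- | [<- | [<- | []]]].
  - apply Permutation_cons_inv, Permutation_length_2 in H as [[-> ->] | [-> ->]]; tauto.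
  - pose proof (perm_trans H (perm_swap q p [r])) as H'.
    apply Permutation_cons_inv, Permutation_length_2 in H' as [[-> ->] | [-> ->]]; tauto.
  - pose proof (perm_trans H (Permutation_sym (Permutation_cons_append [p; q] r))) as H'.
    apply Permutation_cons_inv, Permutation_length_2 in H' as [[-> ->] | [-> ->]]; tauto.
Qed.

Lemma NoDup_3 {A : Type} (x y z : A) : NoDup [x; y; z] <-> x <> y /\ y <> z /\ x <> z.
Proof.
  rewrite !NoDup_cons_iff. simpl. intuition (subst; eauto using NoDup_nil).
Qed.

Lemma Permutation_two {A : Type} (x y : A) (l : list A) :
  In x l -> In y l -> x <> y -> exists r, Permutation l (x :: y :: r).
Proof.
  intros Hx Hy Hxy.
  destruct (in_split x l Hx) as (l1 & l2 & ->).
  assert (Hy' : In y (l1 ++ l2)).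
  { apply in_app_or in Hy as [Hy | [Hy | Hy]]; apply in_or_app; auto. congruence. }
  destruct (in_split y _ Hy') as (m1 & m2 & E).
  exists (m1 ++ m2).
  apply (perm_trans (Permutation_sym (Permutation_middle l1 l2 x))), perm_skip.
  rewrite E. apply Permutation_sym, Permutation_middle.
Qed.

Fixpoint sumR {A : Type} (f : A -> R) (l : list A) : R :=
  match l with
  | [] => 0
  | x :: t => f x + sumR f t
  end.

Lemma sumR_app {A : Type} (f : A -> R) l1 l2 : sumR f (l1 ++ l2) = sumR f l1 + sumR f l2.
Proof. induction l1 as [| x l1 IH]; simpl; [| rewrite IH]; ring. Qed.

Lemma sumR_map {A B : Type} (f : B -> R) (h : A -> B) l :
  sumR f (map h l) = sumR (fun x => f (h x)) l.
Proof. induction l as [| x l IH]; simpl; [| rewrite IH]; reflexivity. Qed.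

Lemma sumR_scal {A : Type} (c : R) (f : A -> R) l : c * sumR f l = sumR (fun x => c * f x) l.
Proof. induction l as [| x l IH]; simpl; [| rewrite <- IH]; ring. Qed.

Lemma sumR_perm {A : Type} (f : A -> R) l l' : Permutation l l' -> sumR f l = sumR f l'.
Proof. induction 1; simpl; lra. Qed.

Lemma sumR_ext_in {A : Type} (f f' : A -> R) l :
  (forall x, In x l -> f x = f' x) -> sumR f l = sumR f' l.
Proof.
  induction l as [| x l IH]; intro H; simpl; [reflexivity |].
  f_equal; [apply H; left; reflexivity | apply IH; intros; apply H; right; assumption].
Qed.

Lemma sumR_le {A : Type} (f f' : A -> R) l : (forall x, f x <= f' x) -> sumR f l <= sumR f' l.
Proof. intro H. induction l as [| x l IH]; simpl; [lra |]. specialize (H x). lra. Qed.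

Lemma sumR_nonneg {A : Type} (f : A -> R) l : (forall x, 0 <= f x) -> 0 <= sumR f l.
Proof. intro H. induction l as [| x l IH]; simpl; [lra |]. specialize (H x). lra. Qed.

Lemma length_filter_le_sumR {A : Type} (b : A -> bool) (f : A -> R) l :
  (forall t, 0 <= f t) -> (forall t, b t = true -> 1 <= f t) ->
  INR (length (filter b l)) <= sumR f l.
Proof.
  intros H0 H1. induction l as [| t l IH]; simpl; [lra |].
  specialize (H0 t). destruct (b t) eqn:E; [| lra].
  simpl length. rewrite S_INR. specialize (H1 t E). lra.
Qed.

(* Side conditions [In], [<>], [NoDup] and [incl] about points drawn from an
   explicit list without duplicates. *)
Ltac in_list := simpl; solve [repeat first [left; reflexivity | right]].

Ltac sub_incl :=
  let x := fresh in let Hx := fresh in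
  intros x Hx; simpl in Hx; repeat destruct Hx as [<- | Hx]; try contradiction; in_list.

Ltac points :=
  first
  [ solve [in_list]
  | match goal with
    | HN : NoDup _ |- _ =>
        let H := fresh in
        solve [pose proof HN as H; rewrite !NoDup_cons_iff in H; simpl in H;
               repeat constructor; simpl; intuition congruence]
    end
  | solve [sub_incl]
  | match goal with
    | HI : incl ?L _ |- incl _ _ => solve [apply (incl_tran (m := L)); [sub_incl | exact HI]]
    end ].

(** * Plane geometry *)

Lemma dist_euc_eq p q : dist p q = dist_euc (fst p) (snd p) (fst q) (snd q).
Proof. unfold dist, dist_euc, Rsqr. f_equal. ring. Qed.

Lemma dist_sym p q : dist p q = dist q p.
Proof. rewrite !dist_euc_eq. apply distance_symm. Qed.

Lemma dist_triangle p q r : dist p r <= dist p q + dist q r.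
Proof. rewrite !dist_euc_eq. apply triangle. Qed.

Lemma dist_sq p q : dist p q * dist p q = (fst p - fst q) ^ 2 + (snd p - snd q) ^ 2.
Proof. apply sqrt_sqrt. apply Rplus_le_le_0_compat; apply pow2_ge_0. Qed.

Lemma dist_pos p q : p <> q -> 0 < dist p q.
Proof.
  destruct p as [a b], q as [c d]; intro Hpq. apply sqrt_lt_R0; unfold fst, snd.
  rewrite <- !Rsqr_pow2.
  destruct (Req_dec a c) as [-> | Hac].
  - apply Rplus_le_lt_0_compat; [apply Rle_0_sqr |].
    apply Rsqr_pos_lt. intro. apply Hpq. f_equal. lra.
  - apply Rplus_lt_le_0_compat; [| apply Rle_0_sqr].
    apply Rsqr_pos_lt. lra.
Qed.

Lemma angle_at_comm v p q : angle_at v p q = angle_at v q p.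
Proof. unfold angle_at. rewrite (Rmult_comm (dist v q)). f_equal. f_equal. ring. Qed.

Lemma cos_angle_at v p q : v <> p -> v <> q ->
  cos (angle_at v p q) * (dist v p * dist v q)
  = (fst p - fst v) * (fst q - fst v) + (snd p - snd v) * (snd q - snd v).
Proof.
  intros Hp Hq.
  set (dot := (fst p - fst v) * (fst q - fst v) + (snd p - snd v) * (snd q - snd v)).
  set (P := dist v p * dist v q).
  assert (HP : 0 < P) by (apply Rmult_lt_0_compat; apply dist_pos; assumption).
  assert (Hcs : dot * dot <= P * P).
  { replace (P * P) with ((dist v p * dist v p) * (dist v q * dist v q)) by (unfold P; ring).
    rewrite !dist_sq. unfold dot.
    set (cross := (fst p - fst v) * (snd q - snd v) - (snd p - snd v) * (fst q - fst v)).
    match goal with |- ?L <= ?R => assert (R - L = cross ^ 2) by (unfold cross; ring) end.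
    pose proof (pow2_ge_0 cross). lra. }
  assert (Hr : dot = dot / P * P) by (field; lra).
  unfold angle_at. fold dot P. rewrite cos_acos; [field; lra |].
  set (r := dot / P) in *. rewrite Hr in Hcs.
  assert (r * r <= 1) by (apply (Rmult_le_reg_r (P * P)); nra).
  split; nra.
Qed.

Lemma law_of_cosines v p q : v <> p -> v <> q ->
  2 * cos (angle_at v p q) * (dist v p * dist v q)
  = dist v p * dist v p + dist v q * dist v q - dist p q * dist p q.
Proof.
  intros Hp Hq. rewrite Rmult_assoc, cos_angle_at by assumption.
  rewrite !dist_sq. ring.
Qed.

Lemma isosceles_of_base_angles A B C t :
  A <> B -> B <> C -> A <> C -> angle_at B A C = t -> angle_at C A B = t -> cos t < 1 ->
  dist A B = dist A C /\ dist B C = 2 * cos t * dist A B.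
Proof.
  intros HAB HBC HAC HB HC Ht.
  pose proof (law_of_cosines B A C (not_eq_sym HAB) HBC) as LB.
  pose proof (law_of_cosines C A B (not_eq_sym HAC) (not_eq_sym HBC)) as LC.
  rewrite HB in LB. rewrite HC in LC.
  rewrite (dist_sym B A) in LB. rewrite (dist_sym C A), (dist_sym C B) in LC.
  pose proof (dist_triangle B A C) as Htri. rewrite (dist_sym B A) in Htri.
  pose proof (dist_pos _ _ HBC).
  set (p := dist A B) in *. set (q := dist A C) in *. set (x := dist B C) in *.
  assert (E : (p - q) * (cos t * x - (p + q)) = 0) by nra.
  assert (Hpq : p = q).
  { apply Rmult_integral in E as [E | E]; [lra |]. nra. }
  split; [exact Hpq |]. subst q. nra.
Qed.

(** * The golden ratio *)

Definition phi : R := 2 * cos (PI / 5).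

Lemma phi_sq : phi * phi = phi + 1.
Proof.
  set (x := PI / 5).
  assert (Hx : 0 < cos x) by (apply cos_gt_0; unfold x; pose proof PI_RGT_0; lra).
  assert (H3 : cos (2 * x + x) = - cos (2 * x)).
  { replace (2 * x + x) with (PI - 2 * x) by (unfold x; field).
    apply Rtrigo_facts.cos_pi_minus. }
  rewrite cos_plus, cos_2a_cos, sin_2a in H3.
  pose proof (sin2_cos2 x) as Hs. unfold Rsqr in Hs.
  assert (E : (cos x + 1) * (4 * cos x ^ 2 - 2 * cos x - 1) = 0) by nra.
  apply Rmult_integral in E as [E | E]; unfold phi; fold x; nra.
Qed.

Lemma phi_bounds : 1.618 < phi < 1.6181.
Proof.
  assert (0 < phi) by (apply Rmult_lt_0_compat; [lra |]; apply cos_gt_0; pose proof PI_RGT_0; lra).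
  pose proof phi_sq. split; nra.
Qed.

Lemma cos_deg36 : cos (deg 36) = phi / 2.
Proof. unfold phi, deg. replace (36 * PI / 180) with (PI / 5) by field. field. Qed.

Lemma cos_deg72 : cos (deg 72) = (phi - 1) / 2.
Proof.
  replace (deg 72) with (2 * (PI / 5)) by (unfold deg; field).
  rewrite cos_2a_cos. pose proof phi_sq. unfold phi in *. nra.
Qed.

(** * Approximate golden triangles *)

Definition near (x t d : R) : Prop := t - d <= x <= t + d.

Lemma near_trans x y t d e : near x y e -> near y t d -> near x t (d + e).
Proof. unfold near. lra. Qed.

Lemma near_dist_move A B A' B' e :
  dist A' A <= e -> dist B' B <= e -> near (dist A' B') (dist A B) (2 * e).
Proof.
  intros HA HB. pose proof (dist_triangle A' A B'). pose proof (dist_triangle A B B').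
  pose proof (dist_triangle A A' B). pose proof (dist_triangle A' B' B).
  rewrite (dist_sym B B') in *. rewrite (dist_sym A A') in *. unfold near. lra.
Qed.

Definition golden_len (long : bool) (u : R) : R := if long then phi * u else u.

Definition approx_isosceles (leg base d : R) (p q r : point) : Prop :=
  (near (dist p q) leg d /\ near (dist p r) leg d /\ near (dist q r) base d) \/
  (near (dist p q) leg d /\ near (dist q r) leg d /\ near (dist p r) base d) \/
  (near (dist p r) leg d /\ near (dist q r) leg d /\ near (dist p q) base d).

Lemma approx_isosceles_swap12 leg base d p q r :
  approx_isosceles leg base d p q r -> approx_isosceles leg base d q p r.
Proof. unfold approx_isosceles. rewrite (dist_sym q p). tauto. Qed.

Lemma approx_isosceles_swap23 leg base d p q r :
  approx_isosceles leg base d p q r -> approx_isosceles leg base d p r q.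
Proof. unfold approx_isosceles. rewrite (dist_sym r q). tauto. Qed.

Lemma approx_isosceles_perm leg base d a b c p q r : Permutation [a; b; c] [p; q; r] ->
  approx_isosceles leg base d a b c -> approx_isosceles leg base d p q r.
Proof.
  intros HP H.
  pose proof approx_isosceles_swap12. pose proof approx_isosceles_swap23.
  apply Permutation_sym, Permutation_3 in HP.
  destruct HP as [E | [E | [E | [E | [E | E]]]]]; injection E as -> -> ->; auto.
Qed.

Lemma approx_isosceles_move leg base d e A B C A' B' C' :
  approx_isosceles leg base d A B C ->
  dist A' A <= e -> dist B' B <= e -> dist C' C <= e ->
  approx_isosceles leg base (d + 2 * e) A' B' C'.
Proof.
  intros H HA HB HC.
  pose proof (near_dist_move A B A' B' e HA HB) as NAB.
  pose proof (near_dist_move A C A' C' e HA HC) as NAC.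
  pose proof (near_dist_move B C B' C' e HB HC) as NBC.
  unfold approx_isosceles in *.
  destruct H as [(E1 & E2 & E3) | [(E1 & E2 & E3) | (E1 & E2 & E3)]];
    [left | right; left | right; right]; repeat split; eapply near_trans; eauto.
Qed.

Lemma good3_approx_isosceles eps leg base X Y Z p q r :
  approx_isosceles leg base 0 X Y Z -> good3 eps (X, Y, Z) p q r ->
  approx_isosceles leg base (2 * (eps * min_side (X, Y, Z))) p q r.
Proof.
  intros H (A' & B' & C' & HP & A & B & C & (E1 & E2 & E3) & HA & HB & HC).
  apply (approx_isosceles_perm _ _ _ A' B' C'); [exact HP |].
  rewrite <- (Rplus_0_l (2 * _)).
  apply (approx_isosceles_move _ _ _ _ A B C); [| exact HA | exact HB | exact HC].
  unfold approx_isosceles. rewrite E1, E2, E3. exact H.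
Qed.

Lemma golden_triangle X Y Z :
  tri_type (X, Y, Z) 108 36 36 \/ tri_type (X, Y, Z) 72 72 36 ->
  exists (k : bool) (u : R),
    0 < u /\ approx_isosceles (golden_len k u) (golden_len (negb k) u) 0 X Y Z.
Proof.
  pose proof phi_bounds as Hphi. pose proof phi_sq as Hphi2.
  intros [HT | HT]; destruct HT as (HXY & HYZ & HXZ & A & B & C & HP & HA & HB & HC);
    assert (HN : NoDup [A; B; C])
      by (apply (Permutation_NoDup (Permutation_sym HP)), NoDup_3; auto);
    apply NoDup_3 in HN as (HAB & HBC & HAC).
  - destruct (isosceles_of_base_angles A B C (deg 36)) as [E1 E2]; auto.
    { rewrite cos_deg36. lra. }
    rewrite cos_deg36 in E2.
    exists false, (dist A B). split; [apply dist_pos; exact HAB |].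
    apply (approx_isosceles_perm _ _ _ A B C); [exact HP |].
    left. unfold near, golden_len. simpl. lra.
  - rewrite angle_at_comm in HA, HB.
    destruct (isosceles_of_base_angles C A B (deg 72)) as [E1 E2]; auto.
    { rewrite cos_deg72. lra. }
    rewrite cos_deg72 in E2.
    exists true, (dist A B). split; [apply dist_pos; exact HAB |].
    apply (approx_isosceles_perm _ _ _ C A B).
    { exact (perm_trans (Permutation_cons_append [A; B] C) HP). }
    assert (Hleg : phi * dist A B = dist C A).
    { rewrite E2. replace (phi * (2 * ((phi - 1) / 2) * dist C A))
        with ((phi * phi - phi) * dist C A) by field.
      rewrite Hphi2. ring. }
    left. unfold near, golden_len. simpl. lra.
Qed.

Lemma min_side_golden k u X Y Z : 0 < u ->
  approx_isosceles (golden_len k u) (golden_len (negb k) u) 0 X Y Z -> min_side (X, Y, Z) = u.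
Proof.
  intros Hu H. pose proof phi_bounds. assert (u < phi * u) by nra.
  unfold min_side, approx_isosceles, near, golden_len in *.
  destruct k; simpl in H; destruct H as [(? & ? & ?) | [(? & ? & ?) | (? & ? & ?)]];
    unfold Rmin; repeat destruct Rle_dec; lra.
Qed.

(** * Rigidity of four points *)

Definition det3 (g11 g22 g33 g12 g13 g23 : R) : R :=
  g11 * g22 * g33 + 2 * (g12 * g13 * g23)
  - g11 * g23 * g23 - g22 * g13 * g13 - g33 * g12 * g12.

(* The Gram determinant of [x1 - y; x2 - y; x3 - y] in terms of the squared
   distances [a_i = |y x_i|^2] and [b_ij = |x_i x_j|^2]. *)
Definition gram (a1 a2 a3 b12 b13 b23 : R) : R :=
  det3 a1 a2 a3 ((a1 + a2 - b12) / 2) ((a1 + a3 - b13) / 2) ((a2 + a3 - b23) / 2).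

Definition sqdist (p q : point) : R := dist p q * dist p q.

Lemma gram_planar y x1 x2 x3 :
  gram (sqdist y x1) (sqdist y x2) (sqdist y x3)
       (sqdist x1 x2) (sqdist x1 x3) (sqdist x2 x3) = 0.
Proof.
  unfold sqdist. rewrite !dist_sq.
  destruct y, x1, x2, x3. unfold gram, det3. simpl. field.
Qed.

Lemma gram_scale k a1 a2 a3 b12 b13 b23 : k <> 0 ->
  gram (a1 / k) (a2 / k) (a3 / k) (b12 / k) (b13 / k) (b23 / k)
  = gram a1 a2 a3 b12 b13 b23 / (k * k * k).
Proof. intro. unfold gram, det3. field. assumption. Qed.

Lemma mult3_perturb x1 x2 x3 y1 y2 y3 e M :
  0 <= e <= 1 -> 0 <= M ->
  Rabs (x1 - y1) <= e -> Rabs (x2 - y2) <= e -> Rabs (x3 - y3) <= e ->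
  Rabs y1 <= M -> Rabs y2 <= M -> Rabs y3 <= M ->
  Rabs (x1 * x2 * x3 - y1 * y2 * y3) <= 3 * ((M + 1) * (M + 1)) * e.
Proof.
  intros He HM H1 H2 H3 K1 K2 K3.
  assert (J2 : Rabs x2 <= M + 1).
  { replace x2 with (x2 - y2 + y2) by ring. pose proof (Rabs_triang (x2 - y2) y2). lra. }
  assert (J3 : Rabs x3 <= M + 1).
  { replace x3 with (x3 - y3 + y3) by ring. pose proof (Rabs_triang (x3 - y3) y3). lra. }
  replace (x1 * x2 * x3 - y1 * y2 * y3)
    with ((x1 - y1) * x2 * x3 + (y1 * (x2 - y2) * x3 + y1 * y2 * (x3 - y3))) by ring.
  pose proof (Rabs_triang ((x1 - y1) * x2 * x3) (y1 * (x2 - y2) * x3 + y1 * y2 * (x3 - y3))).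
  pose proof (Rabs_triang (y1 * (x2 - y2) * x3) (y1 * y2 * (x3 - y3))).
  rewrite !Rabs_mult in *.
  pose proof (Rabs_pos x2). pose proof (Rabs_pos x3). pose proof (Rabs_pos y1).
  pose proof (Rabs_pos y2). pose proof (Rabs_pos (x1 - y1)).
  pose proof (Rabs_pos (x2 - y2)). pose proof (Rabs_pos (x3 - y3)).
  assert (Rabs (x1 - y1) * Rabs x2 * Rabs x3 <= e * (M + 1) * (M + 1)).
  { apply Rmult_le_compat; try apply Rmult_le_compat; try apply Rmult_le_pos; lra. }
  assert (Rabs y1 * Rabs (x2 - y2) * Rabs x3 <= (M + 1) * e * (M + 1)).
  { apply Rmult_le_compat; try apply Rmult_le_compat; try apply Rmult_le_pos; lra. }
  assert (Rabs y1 * Rabs y2 * Rabs (x3 - y3) <= (M + 1) * (M + 1) * e).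
  { apply Rmult_le_compat; try apply Rmult_le_compat; try apply Rmult_le_pos; lra. }
  lra.
Qed.

Lemma Rabs_le_inv x e : Rabs x <= e -> - e <= x <= e.
Proof. pose proof (Rle_abs x). pose proof (Rle_abs (- x)). rewrite Rabs_Ropp in *. lra. Qed.

Lemma det3_perturb g11 g22 g33 g12 g13 g23 h11 h22 h33 h12 h13 h23 e M :
  0 <= e <= 1 -> 0 <= M ->
  Rabs (g11 - h11) <= e -> Rabs (g22 - h22) <= e -> Rabs (g33 - h33) <= e ->
  Rabs (g12 - h12) <= e -> Rabs (g13 - h13) <= e -> Rabs (g23 - h23) <= e ->
  Rabs h11 <= M -> Rabs h22 <= M -> Rabs h33 <= M ->
  Rabs h12 <= M -> Rabs h13 <= M -> Rabs h23 <= M ->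
  Rabs (det3 g11 g22 g33 g12 g13 g23 - det3 h11 h22 h33 h12 h13 h23)
  <= 18 * ((M + 1) * (M + 1)) * e.
Proof.
  intros He HM D11 D22 D33 D12 D13 D23 B11 B22 B33 B12 B13 B23.
  pose proof (mult3_perturb _ _ _ _ _ _ _ _ He HM D11 D22 D33 B11 B22 B33) as P1.
  pose proof (mult3_perturb _ _ _ _ _ _ _ _ He HM D12 D13 D23 B12 B13 B23) as P2.
  pose proof (mult3_perturb _ _ _ _ _ _ _ _ He HM D11 D23 D23 B11 B23 B23) as P3.
  pose proof (mult3_perturb _ _ _ _ _ _ _ _ He HM D22 D13 D13 B22 B13 B13) as P4.
  pose proof (mult3_perturb _ _ _ _ _ _ _ _ He HM D33 D12 D12 B33 B12 B12) as P5.
  apply Rabs_le_inv in P1, P2, P3, P4, P5.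
  apply Rabs_le. unfold det3. lra.
Qed.

(* [golden_len long 1 ^ 2], as phi ^ 2 = phi + 1. *)
Definition sq_golden (long : bool) : R := if long then phi + 1 else 1.

Lemma near_golden_sq b u d x : 0 < u -> 0 <= d <= u / 100000 ->
  near x (golden_len b u) d -> Rabs (x * x / (u * u) - sq_golden b) <= 1 / 20000.
Proof.
  intros Hu Hd [Hlo Hhi]. pose proof phi_bounds. pose proof phi_sq.
  set (t := golden_len b u) in *.
  assert (Ht : t * t = sq_golden b * (u * u) /\ u <= t <= 1.6181 * u)
    by (unfold t, golden_len, sq_golden; destruct b; split; nra).
  assert (Hy : x * x = x * x / (u * u) * (u * u)) by (field; lra).
  set (y := x * x / (u * u)) in *.
  apply Rabs_le. split; apply (Rmult_le_reg_r (u * u)); nra.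
Qed.

Lemma sq_golden_bounds b : 1 <= sq_golden b <= 2.6181.
Proof. pose proof phi_bounds. destruct b; simpl; lra. Qed.

Lemma four_point_rigidity (b01 b02 b03 b12 b13 b23 : bool) u d y x1 x2 x3 :
  0 < u -> 0 <= d <= u / 100000 ->
  near (dist y x1) (golden_len b01 u) d -> near (dist y x2) (golden_len b02 u) d ->
  near (dist y x3) (golden_len b03 u) d -> near (dist x1 x2) (golden_len b12 u) d ->
  near (dist x1 x3) (golden_len b13 u) d -> near (dist x2 x3) (golden_len b23 u) d ->
  Rabs (gram (sq_golden b01) (sq_golden b02) (sq_golden b03)
             (sq_golden b12) (sq_golden b13) (sq_golden b23)) < 1 / 5.
Proof.
  intros Hu Hd N01 N02 N03 N12 N13 N23.
  assert (Huu : u * u <> 0) by nra.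
  assert (Z : gram (sqdist y x1 / (u * u)) (sqdist y x2 / (u * u)) (sqdist y x3 / (u * u))
                   (sqdist x1 x2 / (u * u)) (sqdist x1 x3 / (u * u)) (sqdist x2 x3 / (u * u))
               = 0).
  { rewrite gram_scale, gram_planar by exact Huu. unfold Rdiv. ring. }
  unfold sqdist in Z.
  apply near_golden_sq, Rabs_le_inv in N01, N02, N03, N12, N13, N23; try assumption.
  pose proof (sq_golden_bounds b01). pose proof (sq_golden_bounds b02).
  pose proof (sq_golden_bounds b03). pose proof (sq_golden_bounds b12).
  pose proof (sq_golden_bounds b13). pose proof (sq_golden_bounds b23).
  unfold gram in *.
  match type of Z with det3 ?g11 ?g22 ?g33 ?g12 ?g13 ?g23 = 0 =>
  match goal with |- Rabs (det3 ?h11 ?h22 ?h33 ?h12 ?h13 ?h23) < _ =>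
    assert (D := det3_perturb g11 g22 g33 g12 g13 g23 h11 h22 h33 h12 h13 h23 (1 / 10000) 3)
  end end.
  rewrite Z, Rminus_0_l, Rabs_Ropp in D.
  eapply Rle_lt_trans; [apply D | lra]; try lra; apply Rabs_le; lra.
Qed.

Lemma Rabs_ge x a : a <= x \/ x <= - a -> a <= Rabs x.
Proof. pose proof (Rle_abs x). pose proof (Rle_abs (- x)). rewrite Rabs_Ropp in *. lra. Qed.

Lemma gram_star_ge (s b12 b13 b23 : bool) :
  1 / 5 <= Rabs (gram (sq_golden s) (sq_golden s) (sq_golden s)
                      (sq_golden b12) (sq_golden b13) (sq_golden b23)).
Proof.
  pose proof phi_bounds. pose proof phi_sq.
  apply Rabs_ge. left. destruct s, b12, b13, b23; unfold gram, det3, sq_golden; simpl; nra.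
Qed.

Lemma gram_rhombus_ge (s : bool) :
  1 / 5 <= Rabs (gram (sq_golden s) (sq_golden (negb s)) (sq_golden s)
                      (sq_golden s) (sq_golden (negb s)) (sq_golden s)).
Proof.
  pose proof phi_bounds. pose proof phi_sq.
  apply Rabs_ge. destruct s; unfold gram, det3, sq_golden; simpl; [left | right]; nra.
Qed.

(** * Lagrangians of 3-graphs *)

Section Lagrangian.

Variable A : Type.
Variable g : A -> A -> A -> R.

Fixpoint link (w : A -> R) (x : A) (l : list A) : R :=
  match l with
  | [] => 0
  | y :: t => w y * sumR (fun z => g x y z * w z) t + link w x t
  end.

Fixpoint lagrangian (w : A -> R) (l : list A) : R :=
  match l with
  | [] => 0
  | x :: t => w x * link w x t + lagrangian w t
  end.

Definition weight_sum (w : A -> R) (l : list A) : R := sumR w l.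

Lemma link_pairs w x l :
  link w x l = sumR (fun yz => w (fst yz) * (g x (fst yz) (snd yz) * w (snd yz))) (pairs_of l).
Proof.
  induction l as [| y l IH]; simpl; [reflexivity |].
  rewrite sumR_app, sumR_map, IH, sumR_scal. reflexivity.
Qed.

Lemma lagrangian_triples w l :
  lagrangian w l = sumR (fun t => let '(x, y, z) := t in w x * (w y * (g x y z * w z)))
                        (triples_of l).
Proof.
  induction l as [| x l IH]; simpl; [reflexivity |].
  rewrite sumR_app, sumR_map, IH, link_pairs, sumR_scal. reflexivity.
Qed.

Lemma link_ext w w' x l : (forall p, In p l -> w p = w' p) -> link w x l = link w' x l.
Proof.
  induction l as [| y l IH]; intro H; simpl; [reflexivity |].
  assert (Hl : forall p, In p l -> w p = w' p) by (intros; apply H; right; assumption).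
  rewrite (H y (or_introl eq_refl)), (IH Hl). f_equal. f_equal.
  apply sumR_ext_in. intros z Hz. rewrite (Hl z Hz). reflexivity.
Qed.

Lemma lagrangian_ext w w' l : (forall p, In p l -> w p = w' p) -> lagrangian w l = lagrangian w' l.
Proof.
  induction l as [| x l IH]; intro H; simpl; [reflexivity |].
  assert (Hl : forall p, In p l -> w p = w' p) by (intros; apply H; right; assumption).
  rewrite (H x (or_introl eq_refl)), (IH Hl), (link_ext w w' x l Hl). reflexivity.
Qed.

Section Symmetric.

Hypothesis g_swap12 : forall x y z, g x y z = g y x z.
Hypothesis g_swap23 : forall x y z, g x y z = g x z y.

Lemma link_perm w x l l' : Permutation l l' -> link w x l = link w x l'.
Proof.
  induction 1 as [| y l l' HP IH | y z l | l l' l'' _ IH1 _ IH2]; simpl.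
  - reflexivity.
  - rewrite IH, (sumR_perm _ l l' HP). reflexivity.
  - rewrite (g_swap23 x y z). ring.
  - congruence.
Qed.

Lemma lagrangian_perm w l l' : Permutation l l' -> lagrangian w l = lagrangian w l'.
Proof.
  induction 1 as [| x l l' HP IH | x y l | l l' l'' _ IH1 _ IH2]; simpl.
  - reflexivity.
  - rewrite IH, (link_perm w x l l' HP). reflexivity.
  - rewrite (sumR_ext_in (fun z => g y x z * w z) (fun z => g x y z * w z))
      by (intros; rewrite g_swap12; reflexivity).
    ring.
  - congruence.
Qed.

Definition covers (l : list A) : Prop :=
  forall x y, In x l -> In y l -> x <> y -> exists z, In z l /\ g x y z <> 0.

Definition upd (w : A -> R) (x : A) (v : R) : A -> R :=
  fun p => if excluded_middle_informative (p = x) then v else w p.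

Lemma upd_same w x v : upd w x v x = v.
Proof. unfold upd. destruct excluded_middle_informative; congruence. Qed.

Lemma upd_other w x v l : ~ In x l -> forall p, In p l -> upd w x v p = w p.
Proof. intros Hx p Hp. unfold upd. destruct excluded_middle_informative; congruence. Qed.

(* Zykov symmetrization: when no edge contains both x and y, the Lagrangian is
   affine in (w x, w y) along w x + w y = const, so moving all of this weight
   onto one of the two points does not decrease it. *)
Lemma lagrangian_merge w x y l :
  (forall p, 0 <= w p) -> ~ In x l -> ~ In y l -> (forall z, In z l -> g x y z = 0) ->
  exists v, lagrangian w (x :: y :: l) <= lagrangian (upd w v (w x + w y)) (v :: l) /\
            weight_sum (upd w v (w x + w y)) (v :: l) = weight_sum w (x :: y :: l) /\
            ~ In v l.
Proof.
  intros Hw Hx Hy H0.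
  assert (Hxy : sumR (fun z => g x y z * w z) l = 0).
  { rewrite (sumR_ext_in _ (fun _ => 0)) by (intros z Hz; rewrite H0 by exact Hz; ring).
    clear. induction l; simpl; lra. }
  assert (Hmerge : forall v, ~ In v l ->
    lagrangian (upd w v (w x + w y)) (v :: l) = (w x + w y) * link w v l + lagrangian w l /\
    weight_sum (upd w v (w x + w y)) (v :: l) = weight_sum w (x :: y :: l)).
  { intros v Hv. simpl. unfold weight_sum. simpl.
    rewrite upd_same, (link_ext _ w), (lagrangian_ext _ w), (sumR_ext_in _ w)
      by exact (upd_other w v _ l Hv).
    split; ring. }
  assert (HL : lagrangian w (x :: y :: l) = w x * link w x l + w y * link w y l + lagrangian w l)
    by (simpl; rewrite Hxy; ring).
  rewrite HL. pose proof (Hw x). pose proof (Hw y).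
  destruct (Rle_dec (link w y l) (link w x l)).
  - exists x. destruct (Hmerge x Hx) as [-> ->]. repeat split; [nra | exact Hx].
  - exists y. destruct (Hmerge y Hy) as [-> ->]. repeat split; [nra | exact Hy].
Qed.

Lemma lagrangian_le_of_covers (K : R) :
  (forall l, NoDup l -> covers l ->
     forall w, (forall p, 0 <= w p) -> lagrangian w l <= weight_sum w l ^ 3 * K) ->
  forall l, NoDup l ->
    forall w, (forall p, 0 <= w p) -> lagrangian w l <= weight_sum w l ^ 3 * K.
Proof.
  intros Hcov l. remember (length l) as n eqn:Hn. revert l Hn.
  induction n as [n IH] using lt_wf_ind. intros l -> Hl w Hw.
  destruct (classic (exists x y, In x l /\ In y l /\ x <> y /\ forall z, In z l -> g x y z = 0))
    as [(x & y & Hx & Hy & Hxy & H0) | Hnone].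
  - destruct (Permutation_two x y l Hx Hy Hxy) as (r & HP).
    pose proof (Permutation_NoDup HP Hl) as Hr.
    apply NoDup_cons_iff in Hr as [Hxr Hr]. apply NoDup_cons_iff in Hr as [Hyr Hr].
    assert (Hxr' : ~ In x r) by (intro; apply Hxr; right; assumption).
    rewrite (lagrangian_perm w l _ HP). unfold weight_sum. rewrite (sumR_perm w l _ HP).
    destruct (lagrangian_merge w x y r Hw Hxr' Hyr) as (v & Hle & Hsum & Hv).
    { intros z Hz. apply H0, (Permutation_in z (Permutation_sym HP)). right; right; exact Hz. }
    eapply Rle_trans; [exact Hle |]. unfold weight_sum in Hsum. rewrite <- Hsum.
    apply (IH (length (v :: r))).
    + rewrite (Permutation_length HP). simpl. lia.
    + reflexivity.
    + apply NoDup_cons; assumption.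
    + intro p. unfold upd. destruct excluded_middle_informative; [| apply Hw].
      pose proof (Hw x). pose proof (Hw y). lra.
  - apply Hcov; [exact Hl | | exact Hw].
    intros x y Hx Hy Hxy. apply NNPP. intro Hn. apply Hnone. exists x, y.
    repeat split; try assumption. intros z Hz. apply NNPP. intro Hz'. apply Hn. exists z. auto.
Qed.

End Symmetric.

End Lagrangian.

Arguments link {A} g w x l.
Arguments lagrangian {A} g w l.
Arguments weight_sum {A} w l.
Arguments covers {A} g l.
Arguments upd {A} w x v p.

Lemma lagrangian_mono {A : Type} (g g' : A -> A -> A -> R) w l :
  (forall p, 0 <= w p) -> (forall x y z, g x y z <= g' x y z) ->
  lagrangian g w l <= lagrangian g' w l.
Proof.
  intros Hw Hg. rewrite !lagrangian_triples. apply sumR_le. intros [[x y] z].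
  apply Rmult_le_compat_l, Rmult_le_compat_l, Rmult_le_compat_r; auto.
Qed.

(** * Two-colourings of at most five points *)

Definition exactly_two (a b c : bool) : bool := Nat.eqb (Nat.b2n a + Nat.b2n b + Nat.b2n c) 2.

Definition two_of_four (a b c d : bool) : bool :=
  Nat.eqb (Nat.b2n a + Nat.b2n b + Nat.b2n c + Nat.b2n d) 2.

Definition not_all_eq (a b c : bool) : bool := negb (eqb a b && eqb a c).

Definition rhombus (s01 s12 s23 s30 d02 d13 : bool) : bool :=
  s01 && s12 && s23 && s30 && negb d02 && negb d13.

Lemma not_all_eq_eqb a b c k :
  not_all_eq (eqb a k) (eqb b k) (eqb c k) = not_all_eq a b c.
Proof. destruct a, b, c, k; reflexivity. Qed.

Lemma amgm3 x y z : 0 <= x -> 0 <= y -> 0 <= z -> 27 * (x * y * z) <= (x + y + z) ^ 3.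
Proof.
  intros Hx Hy Hz.
  pose proof (Rmult_le_pos _ _ Hx (pow2_ge_0 (y - z))).
  pose proof (Rmult_le_pos _ _ Hy (pow2_ge_0 (z - x))).
  pose proof (Rmult_le_pos _ _ Hz (pow2_ge_0 (x - y))).
  assert (0 <= (x + y + z) * ((x - y) ^ 2 + (y - z) ^ 2 + (z - x) ^ 2)).
  { apply Rmult_le_pos; [lra |]. pose proof (pow2_ge_0 (x - y)).
    pose proof (pow2_ge_0 (y - z)). pose proof (pow2_ge_0 (z - x)). lra. }
  lra.
Qed.

(* The five cyclic rotations of this form add up to
   3800 * (s^3/25 - (w0 w1 w2 + w1 w2 w3 + w2 w3 w4 + w3 w4 w0 + w4 w0 w1)),
   where s = w0 + ... + w4; the weights solve the corresponding linear system. *)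
Definition pentagon_sos (w0 w1 w2 w3 w4 : R) : R :=
  w0 * (32 * (- w0 + 2 * w1 - w2 + 2 * w3 - 2 * w4) ^ 2 + 36 * (w4 - w1) ^ 2
        + 32 * (- w0 - 2 * w1 + 2 * w2 - w3 + 2 * w4) ^ 2
        + 44 * (- w0 - w1 + 2 * w2 - 2 * w3 + 2 * w4) ^ 2
        + 8 * (- 2 * w1 + w2 - w3 + 2 * w4) ^ 2
        + 44 * (- w0 + 2 * w1 - 2 * w2 + 2 * w3 - w4) ^ 2).

Lemma pentagon_sos_nonneg w0 w1 w2 w3 w4 : 0 <= w0 -> 0 <= pentagon_sos w0 w1 w2 w3 w4.
Proof.
  intro. apply Rmult_le_pos; [assumption |].
  repeat apply Rplus_le_le_0_compat; apply Rmult_le_pos; try lra; apply pow2_ge_0.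
Qed.

Lemma pentagon_lagrangian w0 w1 w2 w3 w4 :
  0 <= w0 -> 0 <= w1 -> 0 <= w2 -> 0 <= w3 -> 0 <= w4 ->
  w0 * w1 * w2 + w1 * w2 * w3 + w2 * w3 * w4 + w3 * w4 * w0 + w4 * w0 * w1
  <= (w0 + w1 + w2 + w3 + w4) ^ 3 / 25.
Proof.
  intros H0 H1 H2 H3 H4.
  assert (E : 3800 * ((w0 + w1 + w2 + w3 + w4) ^ 3 / 25
                - (w0 * w1 * w2 + w1 * w2 * w3 + w2 * w3 * w4 + w3 * w4 * w0 + w4 * w0 * w1))
              = pentagon_sos w0 w1 w2 w3 w4 + pentagon_sos w1 w2 w3 w4 w0
                + pentagon_sos w2 w3 w4 w0 w1 + pentagon_sos w3 w4 w0 w1 w2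
                + pentagon_sos w4 w0 w1 w2 w3)
    by (unfold pentagon_sos; field).
  pose proof (pentagon_sos_nonneg w0 w1 w2 w3 w4 H0).
  pose proof (pentagon_sos_nonneg w1 w2 w3 w4 w0 H1).
  pose proof (pentagon_sos_nonneg w2 w3 w4 w0 w1 H2).
  pose proof (pentagon_sos_nonneg w3 w4 w0 w1 w2 H3).
  pose proof (pentagon_sos_nonneg w4 w0 w1 w2 w3 H4).
  lra.
Qed.

Section TwoColouring.

Variable A : Type.
Variable c : A -> A -> bool.
Hypothesis c_sym : forall p q, c p q = c q p.

Definition two_legs (p q r : A) : R := if exactly_two (c p q) (c p r) (c q r) then 1 else 0.

Definition star_free (Q : list A) : Prop :=
  forall y x1 x2 x3, NoDup [y; x1; x2; x3] -> incl [y; x1; x2; x3] Q ->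
    not_all_eq (c y x1) (c y x2) (c y x3) = true.

Definition rhombus_free (Q : list A) : Prop :=
  forall p0 p1 p2 p3, NoDup [p0; p1; p2; p3] -> incl [p0; p1; p2; p3] Q ->
    rhombus (c p0 p1) (c p1 p2) (c p2 p3) (c p3 p0) (c p0 p2) (c p1 p3) = false.

Lemma star_free_two_of_four Q y x1 x2 x3 x4 : star_free Q ->
  NoDup [y; x1; x2; x3; x4] -> incl [y; x1; x2; x3; x4] Q ->
  two_of_four (c y x1) (c y x2) (c y x3) (c y x4) = true.
Proof.
  intros Hs HN HI.
  generalize (Hs y x1 x2 x3 ltac:(points) ltac:(points))
             (Hs y x1 x2 x4 ltac:(points) ltac:(points))
             (Hs y x1 x3 x4 ltac:(points) ltac:(points))
             (Hs y x2 x3 x4 ltac:(points) ltac:(points)).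
  destruct (c y x1), (c y x2), (c y x3), (c y x4); easy.
Qed.

Lemma star_free_length Q : NoDup Q -> star_free Q -> (length Q <= 5)%nat.
Proof.
  intros HN Hs.
  destruct Q as [| p0 [| p1 [| p2 [| p3 [| p4 [| p5 r]]]]]]; simpl; try lia. exfalso.
  generalize (star_free_two_of_four _ p0 p1 p2 p3 p4 Hs ltac:(points) ltac:(points))
             (star_free_two_of_four _ p0 p1 p2 p3 p5 Hs ltac:(points) ltac:(points))
             (star_free_two_of_four _ p0 p1 p2 p4 p5 Hs ltac:(points) ltac:(points))
             (star_free_two_of_four _ p0 p1 p3 p4 p5 Hs ltac:(points) ltac:(points))
             (star_free_two_of_four _ p0 p2 p3 p4 p5 Hs ltac:(points) ltac:(points)).
  destruct (c p0 p1), (c p0 p2), (c p0 p3), (c p0 p4), (c p0 p5); easy.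
Qed.

(* Star- and rhombus-freeness leave at most two two-leg triples, and two such
   triples share a pair [a; b]; AM-GM bounds [w a * w b * (w c + w d)] by s^3/27. *)
Lemma lagrangian_two_legs_4 p0 p1 p2 p3 w : (forall p, 0 <= w p) ->
  NoDup [p0; p1; p2; p3] -> star_free [p0; p1; p2; p3] -> rhombus_free [p0; p1; p2; p3] ->
  lagrangian two_legs w [p0; p1; p2; p3] <= weight_sum w [p0; p1; p2; p3] ^ 3 / 25.
Proof.
  intros Hw HN Hs Hr.
  pose proof (fun a b c d => amgm3 (w a) (w b) (w c + w d) (Hw a) (Hw b)
                               (Rplus_le_le_0_compat _ _ (Hw c) (Hw d))) as M.
  pose proof (fun a b c => Rmult_le_pos _ _ (Rmult_le_pos _ _ (Hw a) (Hw b)) (Hw c)) as N.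
  pose proof (M p0 p1 p2 p3). pose proof (M p0 p2 p1 p3). pose proof (M p0 p3 p1 p2).
  pose proof (M p1 p2 p0 p3). pose proof (M p1 p3 p0 p2). pose proof (M p2 p3 p0 p1).
  pose proof (N p0 p1 p2). pose proof (N p0 p1 p3).
  pose proof (N p0 p2 p3). pose proof (N p1 p2 p3).
  clear M N.
  generalize (Hs p0 p1 p2 p3 ltac:(points) ltac:(points))
             (Hs p1 p0 p2 p3 ltac:(points) ltac:(points))
             (Hs p2 p0 p1 p3 ltac:(points) ltac:(points))
             (Hs p3 p0 p1 p2 ltac:(points) ltac:(points))
             (Hr p0 p1 p2 p3 ltac:(points) ltac:(points))
             (Hr p0 p1 p3 p2 ltac:(points) ltac:(points))
             (Hr p0 p2 p1 p3 ltac:(points) ltac:(points)).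
  rewrite ?(c_sym p1 p0), ?(c_sym p2 p0), ?(c_sym p2 p1), ?(c_sym p3 p0), ?(c_sym p3 p1),
    ?(c_sym p3 p2).
  unfold two_legs, weight_sum. simpl.
  destruct (c p0 p1), (c p0 p2), (c p0 p3), (c p1 p2), (c p1 p3), (c p2 p3);
    simpl; intros; try discriminate; lra.
Qed.

(* Every point has two neighbours of each colour, so the [true] pairs form a
   5-cycle whose consecutive triples are the two-leg triples; the twelve
   5-cycles are the cases that survive the case split. *)
Lemma lagrangian_two_legs_5 p0 p1 p2 p3 p4 w : (forall p, 0 <= w p) ->
  NoDup [p0; p1; p2; p3; p4] -> star_free [p0; p1; p2; p3; p4] ->
  lagrangian two_legs w [p0; p1; p2; p3; p4] <= weight_sum w [p0; p1; p2; p3; p4] ^ 3 / 25.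
Proof.
  intros Hw HN Hs.
  pose proof (fun a b c d e => pentagon_lagrangian (w a) (w b) (w c) (w d) (w e)
                                 (Hw a) (Hw b) (Hw c) (Hw d) (Hw e)) as C.
  pose proof (C p0 p1 p2 p3 p4). pose proof (C p0 p1 p2 p4 p3).
  pose proof (C p0 p1 p3 p2 p4). pose proof (C p0 p1 p3 p4 p2).
  pose proof (C p0 p1 p4 p2 p3). pose proof (C p0 p1 p4 p3 p2).
  pose proof (C p0 p2 p1 p3 p4). pose proof (C p0 p2 p1 p4 p3).
  pose proof (C p0 p2 p3 p1 p4). pose proof (C p0 p2 p4 p1 p3).
  pose proof (C p0 p3 p1 p2 p4). pose proof (C p0 p3 p2 p1 p4).
  clear C.
  generalize (star_free_two_of_four _ p0 p1 p2 p3 p4 Hs ltac:(points) ltac:(points))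
             (star_free_two_of_four _ p1 p0 p2 p3 p4 Hs ltac:(points) ltac:(points))
             (star_free_two_of_four _ p2 p0 p1 p3 p4 Hs ltac:(points) ltac:(points))
             (star_free_two_of_four _ p3 p0 p1 p2 p4 Hs ltac:(points) ltac:(points))
             (star_free_two_of_four _ p4 p0 p1 p2 p3 Hs ltac:(points) ltac:(points)).
  rewrite ?(c_sym p1 p0), ?(c_sym p2 p0), ?(c_sym p2 p1), ?(c_sym p3 p0), ?(c_sym p3 p1),
    ?(c_sym p3 p2), ?(c_sym p4 p0), ?(c_sym p4 p1), ?(c_sym p4 p2), ?(c_sym p4 p3).
  unfold two_legs, weight_sum. simpl.
  destruct (c p0 p1), (c p0 p2), (c p0 p3), (c p0 p4), (c p1 p2),
           (c p1 p3), (c p1 p4), (c p2 p3), (c p2 p4), (c p3 p4);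
    simpl; intros; try discriminate; lra.
Qed.

Lemma lagrangian_two_legs_le Q w : (forall p, 0 <= w p) ->
  NoDup Q -> star_free Q -> rhombus_free Q ->
  lagrangian two_legs w Q <= weight_sum w Q ^ 3 / 25.
Proof.
  intros Hw HN Hs Hr.
  pose proof (star_free_length Q HN Hs) as Hlen.
  assert (0 <= weight_sum w Q ^ 3 / 25).
  { apply Rmult_le_pos; [apply pow_le, sumR_nonneg, Hw | lra]. }
  destruct Q as [| p0 [| p1 [| p2 [| p3 [| p4 [| p5 r]]]]]]; simpl in Hlen; try lia.
  - simpl in *. lra.
  - simpl in *. lra.
  - simpl in *. lra.
  - pose proof (amgm3 (w p0) (w p1) (w p2) (Hw p0) (Hw p1) (Hw p2)).
    assert (0 <= w p0 * w p1 * w p2) by (repeat apply Rmult_le_pos; apply Hw).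
    unfold weight_sum, two_legs in *. simpl in *.
    destruct exactly_two; lra.
  - apply lagrangian_two_legs_4; assumption.
  - apply lagrangian_two_legs_5; assumption.
Qed.

End TwoColouring.

Arguments two_legs {A} c p q r.
Arguments star_free {A} c Q.
Arguments rhombus_free {A} c Q.

(** * The hypergraph of approximate golden triangles *)

Lemma Pdec_spec (P : Prop) : Pdec P = true <-> P.
Proof. unfold Pdec. destruct excluded_middle_informative; split; congruence || tauto. Qed.

Lemma Pdec_iff (P P' : Prop) : (P <-> P') -> Pdec P = Pdec P'.
Proof.
  intro H. unfold Pdec.
  destruct (excluded_middle_informative P), (excluded_middle_informative P'); tauto.
Qed.

Definition is_long (u d : R) (p q : point) : bool := Pdec (near (dist p q) (phi * u) d).

Definition is_leg (k : bool) (u d : R) (p q : point) : bool := eqb (is_long u d p q) k.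

Definition golden_pair (u d : R) (p q : point) : Prop :=
  near (dist p q) (golden_len (is_long u d p q) u) d.

Definition golden_edge (k : bool) (u d : R) (p q r : point) : R :=
  if Pdec (approx_isosceles (golden_len k u) (golden_len (negb k) u) d p q r) then 1 else 0.

Section GoldenScale.

Variables u d : R.
Hypothesis u_pos : 0 < u.
Hypothesis d_small : 0 <= d <= u / 100000.

Lemma is_long_sym p q : is_long u d p q = is_long u d q p.
Proof. unfold is_long. rewrite dist_sym. reflexivity. Qed.

Lemma is_long_golden b p q : near (dist p q) (golden_len b u) d -> is_long u d p q = b.
Proof.
  intro H. unfold is_long. destruct b; simpl in H; [apply Pdec_spec, H |].
  destruct (Pdec (near (dist p q) (phi * u) d)) eqn:E; [| reflexivity].
  exfalso. rewrite Pdec_spec in E. pose proof phi_bounds. unfold near in *. nra.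
Qed.

Lemma golden_pair_of_near b p q : near (dist p q) (golden_len b u) d -> golden_pair u d p q.
Proof. intro H. unfold golden_pair. rewrite (is_long_golden b); assumption. Qed.

Lemma golden_star y x1 x2 x3 :
  golden_pair u d y x1 -> golden_pair u d y x2 -> golden_pair u d y x3 ->
  golden_pair u d x1 x2 -> golden_pair u d x1 x3 -> golden_pair u d x2 x3 ->
  not_all_eq (is_long u d y x1) (is_long u d y x2) (is_long u d y x3) = true.
Proof.
  unfold golden_pair. intros N1 N2 N3 N12 N13 N23.
  destruct (not_all_eq _ _ _) eqn:E; [reflexivity | exfalso].
  assert (E' : is_long u d y x2 = is_long u d y x1 /\ is_long u d y x3 = is_long u d y x1)
    by (revert E; unfold not_all_eq;
        destruct (is_long u d y x1), (is_long u d y x2), (is_long u d y x3); easy).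
  destruct E' as [E2 E3]. rewrite E2 in N2. rewrite E3 in N3.
  pose proof (four_point_rigidity _ _ _ _ _ _ u d y x1 x2 x3 u_pos d_small
                N1 N2 N3 N12 N13 N23).
  pose proof (gram_star_ge (is_long u d y x1)
                (is_long u d x1 x2) (is_long u d x1 x3) (is_long u d x2 x3)).
  lra.
Qed.

Lemma golden_rhombus k p0 p1 p2 p3 :
  golden_pair u d p0 p1 -> golden_pair u d p0 p2 -> golden_pair u d p0 p3 ->
  golden_pair u d p1 p2 -> golden_pair u d p1 p3 -> golden_pair u d p2 p3 ->
  rhombus (is_leg k u d p0 p1) (is_leg k u d p1 p2) (is_leg k u d p2 p3)
          (is_leg k u d p3 p0) (is_leg k u d p0 p2) (is_leg k u d p1 p3) = false.
Proof.
  unfold golden_pair. intros N01 N02 N03 N12 N13 N23.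
  pose proof (four_point_rigidity _ _ _ _ _ _ u d p0 p1 p2 p3 u_pos d_small
                N01 N02 N03 N12 N13 N23).
  pose proof (gram_rhombus_ge k).
  destruct (rhombus _ _ _ _ _ _) eqn:E; [exfalso | reflexivity].
  assert (Hneg : forall a, eqb a k = false -> a = negb k) by (intros []; destruct k; easy).
  unfold rhombus, is_leg in E. rewrite !andb_true_iff, !negb_true_iff, !eqb_true_iff in E.
  destruct E as (((((E01 & E12) & E23) & E30) & E02) & E13).
  rewrite is_long_sym in E30.
  rewrite E01, E12, E23, E30, (Hneg _ E02), (Hneg _ E13) in *.
  lra.
Qed.

Variable k : bool.

Lemma golden_edge_swap12 p q r : golden_edge k u d p q r = golden_edge k u d q p r.
Proof.
  unfold golden_edge. erewrite Pdec_iff; [reflexivity |].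
  split; apply approx_isosceles_swap12.
Qed.

Lemma golden_edge_swap23 p q r : golden_edge k u d p q r = golden_edge k u d p r q.
Proof.
  unfold golden_edge. erewrite Pdec_iff; [reflexivity |].
  split; apply approx_isosceles_swap23.
Qed.

Lemma golden_edge_le_two_legs p q r :
  golden_edge k u d p q r <= two_legs (is_leg k u d) p q r.
Proof.
  unfold golden_edge, two_legs, is_leg.
  destruct (Pdec _) eqn:E; [| destruct exactly_two; lra].
  rewrite Pdec_spec in E. unfold approx_isosceles in E.
  destruct E as [(E1 & E2 & E3) | [(E1 & E2 & E3) | (E1 & E2 & E3)]];
    rewrite (is_long_golden _ _ _ E1), (is_long_golden _ _ _ E2), (is_long_golden _ _ _ E3);
    destruct k; simpl; lra.
Qed.

Lemma golden_edge_pair p q r : golden_edge k u d p q r <> 0 -> golden_pair u d p q.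
Proof.
  unfold golden_edge. destruct (Pdec _) eqn:E; [| lra]. intros _.
  rewrite Pdec_spec in E. unfold approx_isosceles in E.
  destruct E as [(E & _) | [(E & _) | (_ & _ & E)]]; exact (golden_pair_of_near _ _ _ E).
Qed.

Lemma covers_golden_pair Q l : covers (golden_edge k u d) Q -> incl l Q ->
  forall x y, In x l -> In y l -> x <> y -> golden_pair u d x y.
Proof.
  intros Hcov HI x y Hx Hy Hxy.
  destruct (Hcov x y (HI x Hx) (HI y Hy) Hxy) as (z & _ & Hz).
  exact (golden_edge_pair _ _ _ Hz).
Qed.

Lemma golden_edge_lagrangian_covering Q w : (forall p, 0 <= w p) ->
  NoDup Q -> covers (golden_edge k u d) Q ->
  lagrangian (golden_edge k u d) w Q <= weight_sum w Q ^ 3 / 25.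
Proof.
  intros Hw HN Hcov.
  eapply Rle_trans; [apply lagrangian_mono; [exact Hw | apply golden_edge_le_two_legs] |].
  apply lagrangian_two_legs_le; [| exact Hw | exact HN | |].
  - intros p q. unfold is_leg. rewrite is_long_sym. reflexivity.
  - intros y x1 x2 x3 HN4 HI. unfold is_leg. rewrite not_all_eq_eqb.
    apply golden_star; apply (covers_golden_pair Q _ Hcov HI); points.
  - intros p0 p1 p2 p3 HN4 HI.
    apply golden_rhombus; apply (covers_golden_pair Q _ Hcov HI); points.
Qed.

End GoldenScale.

Lemma weight_sum_ones {A : Type} (l : list A) : weight_sum (fun _ => 1) l = INR (length l).
Proof.
  unfold weight_sum. induction l as [| x l IH]; [reflexivity |].
  simpl sumR. simpl length. rewrite IH, S_INR. ring.
Qed.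

Lemma count_good_le_lagrangian eps k u X Y Z P : 0 < u ->
  approx_isosceles (golden_len k u) (golden_len (negb k) u) 0 X Y Z ->
  INR (count_good eps (X, Y, Z) P)
  <= lagrangian (golden_edge k u (2 * (eps * u))) (fun _ => 1) P.
Proof.
  intros Hu HT. rewrite lagrangian_triples. unfold count_good.
  apply length_filter_le_sumR; intros [[p q] r]; unfold golden_edge.
  - destruct (Pdec _); lra.
  - rewrite Pdec_spec. intro Hgood.
    pose proof (good3_approx_isosceles _ _ _ _ _ _ _ _ _ HT Hgood) as H.
    rewrite (min_side_golden k u X Y Z Hu HT) in H.
    apply Pdec_spec in H. rewrite H. lra.
Qed.

Theorem lemma3p6 (T : point * point * point) :
  (tri_type T 108 36 36 \/ tri_type T 72 72 36) ->
  forall n : nat, (0 < n)%nat -> h_le n T (INR n ^ 3 / 25).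
Proof.
  intros HT n _. destruct T as [[X Y] Z].
  destruct (golden_triangle X Y Z HT) as (k & u & Hu & HXYZ).
  set (eps := 1 / 1000000).
  assert (Hd : 0 <= 2 * (eps * u) <= u / 100000) by (unfold eps; lra).
  exists eps. split; [unfold eps; lra |].
  intros P HP Hlen.
  eapply Rle_trans; [apply (count_good_le_lagrangian eps k u X Y Z P Hu HXYZ) |].
  rewrite <- Hlen, <- weight_sum_ones.
  apply (lagrangian_le_of_covers _ _ (golden_edge_swap12 _ _ k) (golden_edge_swap23 _ _ k));
    [| exact HP | intros; lra].
  intros Q HQ Hcov w Hw. exact (golden_edge_lagrangian_covering _ _ Hu Hd k Q w Hw HQ Hcov).
Qed.
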